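(* Consider Algorithm iR2N (described in the context), suppose (A1), (A2), (A3), (A4), (A6), (A7) hold and that the algorithm generates infinitely many successful iterations. Let $\epsilon>0$, $k_\epsilon=\min\{k\in\mathbb{N}\mid \nu_k^{-1}\|\hat s_{k,\mathrm{cp}}\|<\epsilon\}$ and $\mathcal{S}(\epsilon)=\{k\in\mathbb{N}\mid \hat\rho_k\ge\hat\eta_1,\ k<k_\epsilon\}$. Then $$|\mathcal{S}(\epsilon)|\le \frac{(f+h)(x_0)-(f+h)_{\mathrm{low}}}{\tfrac12\eta_1(1-\theta_1)\nu_{\min}}\,\epsilon^{-2}=:\omega_s\epsilon^{-2}.$$
   Context: Setting. $f:\mathbb{R}^n\to\mathbb{R}$ is continuously differentiable, $h:\mathbb{R}^n\to\mathbb{R}\cup\{+\infty\}$ is proper and lower semicontinuous; the problem is $\min_x f(x)+h(x)$. $\|\cdot\|$ is the Euclidean norm (spectral norm for matrices). For each $x$, approximations $\hat f(x)\in\mathbb{R}$ of $f(x)$ and $\hat\nabla f(x)\in\mathbb{R}^n$ of $\nabla f(x)$ are available. For each $x$, $\psi(\cdot;x):\mathbb{R}^n\to\mathbb{R}\cup\{+\infty\}$ is proper, lsc, satisfies $\psi(0;x)=h(x)$ and $\partial\psi(0;x)\subseteq\partial h(x)$ ($\partial$ = limiting subdifferential), and is uniformly prox-bounded: there is $\lambda>0$ such that for every $x$ and every $0<\lambda'<\lambda$, $w\mapsto\psi(w;x)+\tfrac{1}{2\lambda'}\|w\|^2$ is bounded below. Models: $\varphi_{\mathrm{cp}}(s;x)=\hat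 f(x)+\hat\nabla f(x)^Ts$; $m_{\mathrm{cp}}(s;x,\nu^{-1})=\varphi_{\mathrm{cp}}(s;x)+\tfrac12\nu^{-1}\|s\|^2+\psi(s;x)$; for a symmetric $B(x)\in\mathbb{R}^{n\times n}$, $\varphi(s;x)=\hat f(x)+\hat\nabla f(x)^Ts+\tfrac12 s^TB(x)s$ and $m(s;x,\sigma)=\varphi(s;x)+\tfrac12\sigma\|s\|^2+\psi(s;x)$. Algorithm iR2N. Constants: $\kappa_f,\kappa_\nabla>0$, $0<\gamma_3\le 1<\gamma_1\le\gamma_2$, $0<\hat\eta_1\le\hat\eta_2<1$, $0<\theta_1<1<\theta_2$, $\sigma_{\min}>4\kappa_f\theta_1\theta_2^2/(\hat\eta_1(1-\theta_1))$, $\sigma_0\ge\sigma_{\min}$, $x_0\in\mathbb{R}^n$. At iteration $k=0,1,\dots$: choose symmetric $B_k=B(x_k)$; set $\nu_k=\theta_1/(\|B_k\|+\sigma_k)$; compute $\hat s_{k,\mathrm{cp}}$ with $m_{\mathrm{cp}}(\hat s_{k,\mathrm{cp}};x_k,\nu_k^{-1})\le m_{\mathrm{cp}}(0;x_k,\nu_k^{-1})$ (an approximate minimizer of $m_{\mathrm{cp}}(\cdot;x_k,\nu_k^{-1})$ obtained by a descent procedure from $s=0$) and set $\hat\xi_{k,\mathrm{cp}}=(\varphi_{\mathrm{cp}}+\psi)(0;x_k)-(\varphi_{\mathrm{cp}}+\psi)(\hat s_{k,\mathrm{cp}};x_k)$; compute $s_k$ with $m(s_k;x_k,\sigma_k)\le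 m(\hat s_{k,\mathrm{cp}};x_k,\sigma_k)$; if $\|s_k\|>\theta_2\|\hat s_{k,\mathrm{cp}}\|$, reset $s_k=\hat s_{k,\mathrm{cp}}$ (these computations are repeated with refined $\hat f,\hat\nabla f$ until (A6) holds). Compute $$\hat\rho_k=\frac{\hat f(x_k)+h(x_k)-\hat f(x_k+s_k)-h(x_k+s_k)}{\varphi(0;x_k)+\psi(0;x_k)-\varphi(s_k;x_k)-\psi(s_k;x_k)},$$ where $\varphi(\cdot;x_k)$ uses $B_k$. If $\hat\rho_k\ge\hat\eta_1$ (successful) set $x_{k+1}=x_k+s_k$, else $x_{k+1}=x_k$. Choose $\sigma_{k+1}\in[\gamma_3\sigma_k,\sigma_k]$ if $\hat\rho_k\ge\hat\eta_2$ (very successful), $\sigma_{k+1}\in[\sigma_k,\gamma_1\sigma_k]$ if $\hat\eta_1\le\hat\rho_k<\hat\eta_2$, $\sigma_{k+1}\in[\gamma_1\sigma_k,\gamma_2\sigma_k]$ if $\hat\rho_k<\hat\eta_1$; then reset $\sigma_{k+1}=\max(\sigma_{k+1},\sigma_{\min})$. Assumptions. (A1) $|f(x+s)-f(x)-\nabla f(x)^Ts|\le\tfrac12L\|s\|^2$ for all $x,s$, for some $L\ge0$. (A2) $\|B_k\|\le\kappa_B$ for all $k$, for some $\kappa_B>0$. (A3) $|\psi(s;x)-h(x+s)|\le\kappa_h\|s\|^2$ for all $x,s$, for some $\kappa_h>0$. (A4) For all $k$, $\varphi(0;x_k)+\psi(0;x_k)-(\varphi(s_k;x_k)+\psi(s_k;x_k))\ge(1-\theta_1)\hat\xi_{k,\mathrm{cp}}$.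 (A6) For all $k$: $|f(x_k)-\hat f(x_k)|\le\kappa_f\|s_k\|^2$, $|f(x_k+s_k)-\hat f(x_k+s_k)|\le\kappa_f\|s_k\|^2$, $\|\nabla f(x_k)-\hat\nabla f(x_k)\|\le\kappa_\nabla\|s_k\|$. (A7) There is $(f+h)_{\mathrm{low}}\in\mathbb{R}$ with $(f+h)(x)\ge(f+h)_{\mathrm{low}}$ for all $x$. Constants: $\eta_1=\hat\eta_1-4\kappa_f\theta_1\theta_2^2/((1-\theta_1)\sigma_{\min})$; $\sigma_{\mathrm{succ}}=\max\big(\theta_1\theta_2^2(L+\kappa_B+2\kappa_h+4\kappa_f+2\kappa_\nabla)/((1-\theta_1)(1-\hat\eta_2)),\ \lambda^{-1}\big)$; $\sigma_{\max}=\max(\sigma_0,\gamma_2\sigma_{\mathrm{succ}})$ (an upper bound on all $\sigma_k$); $\nu_{\min}=\theta_1/(\kappa_B+\sigma_{\max})$, so that $\nu_k\ge\nu_{\min}$ for all $k$. *)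

From mathcomp Require Import all_boot all_order all_algebra.
From mathcomp Require Import all_classical all_reals all_analysis.
Set Implicit Arguments. Unset Strict Implicit. Unset Printing Implicit Defensive.
Import Order.TTheory GRing.Theory Num.Theory.
Import numFieldNormedType.Exports.
Local Open Scope classical_set_scope.
Local Open Scope ring_scope.

Section Defs.
Variables (R : realType) (n : nat).
Local Notation vec := 'rV[R]_n.

Definition dotp (u v : vec) : R := \sum_(i < n) u ord0 i * v ord0 i.
Definition enorm (v : vec) : R := Num.sqrt (\sum_(i < n) v ord0 i ^+ 2).

(* spectral norm: sup of ||B v|| over ||v|| <= 1 (B v written v *m B^T for rows) *)
Definition opnorm (B : 'M[R]_n) : R :=
  sup [set enorm (v *m B^T) | v in [set v : vec | enorm v <= 1]].

Definition quad (B : 'M[R]_n) (s : vec) : R := (s *m B *m s^T) ord0 ord0.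

Definition proper_fun (g : vec -> \bar R) : Prop :=
  (forall x, g x <> -oo%E) /\ (exists x, exists r : R, g x = r%:E).

Definition frechet_subgrad (g : vec -> \bar R) (x v : vec) : Prop :=
  (exists r : R, g x = r%:E) /\
  forall e : R, 0 < e -> exists2 d : R, 0 < d &
    forall y : vec, enorm (y - x) < d ->
      (g x + (dotp v (y - x) - e * enorm (y - x))%:E <= g y)%E.

Definition limiting_subgrad (g : vec -> \bar R) (x v : vec) : Prop :=
  exists (xs vs : nat -> vec),
    xs @ \oo --> x /\ (fun j => g (xs j)) @ \oo --> g x /\ vs @ \oo --> v /\
    forall j, frechet_subgrad g (xs j) (vs j).

Definition nu_of (th1 : R) (B : 'M[R]_n) (sigma : R) : R := th1 / (opnorm B + sigma).
Definition phi_cp (fh : R) (g : vec) (s : vec) : R := fh + dotp g s.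
Definition m_cp (fh : R) (g : vec) (psix : vec -> \bar R) (nuinv : R) (s : vec) : \bar R :=
  ((phi_cp fh g s + 2^-1 * nuinv * enorm s ^+ 2)%:E + psix s)%E.
Definition phi_q (fh : R) (g : vec) (B : 'M[R]_n) (s : vec) : R :=
  fh + dotp g s + 2^-1 * quad B s.
Definition m_q (fh : R) (g : vec) (B : 'M[R]_n) (psix : vec -> \bar R) (sigma : R) (s : vec) : \bar R :=
  ((phi_q fh g B s + 2^-1 * sigma * enorm s ^+ 2)%:E + psix s)%E.

Definition xi_cp (fh : R) (g : vec) (psix : vec -> \bar R) (scp : vec) : \bar R :=
  ((phi_cp fh g (0%R : vec))%:E + psix (0%R : vec) - ((phi_cp fh g scp)%:E + psix scp))%E.

Definition pred_decr (fh : R) (g : vec) (B : 'M[R]_n) (psix : vec -> \bar R) (s : vec) : \bar R :=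
  ((phi_q fh g B (0%R : vec))%:E + psix (0%R : vec) - ((phi_q fh g B s)%:E + psix s))%E.

Definition act_decr (h : vec -> \bar R) (x s : vec) (fh0 fh1 : R) : \bar R :=
  ((fh0%:E + h x) - (fh1%:E + h (x + s)%R))%E.

(* rho_k = numerator / denominator; computed on the real parts (fine), with
   the MathComp convention r / 0 = 0 *)
Definition rho_hat (num den : \bar R) : R := fine num / fine den.

End Defs.

From mathcomp Require Import all_boot all_order all_algebra.
From mathcomp Require Import all_classical all_reals all_analysis.
From mathcomp Require Import ring lra.
Import Order.TTheory GRing.Theory Num.Theory.
Import numFieldNormedType.Exports.
Local Open Scope classical_set_scope.
Local Open Scope ring_scope.

Set Implicit Arguments. Unset Strict Implicit.

(* Write q = ||s_cp||^2. The Cauchy decrease and (A4) bound the model decrease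
   below by (1 - th1) q / (2 nu_k), while (A1), (A2), (A3) and (A6) bound the
   gap between model and (approximate) actual decrease by a multiple of
   ||s_k||^2 <= th2^2 q. Hence a successful step decreases f + h by at least
   eta1 (1 - th1) q / (2 nu_k), and every step with sigma_k >= sigma_succ is very
   successful; so sigma_k <= sigma_max, i.e. nu_k >= nu_min, as long as s_cp
   does not vanish. Before k_eps we have q / nu_k = nu_k (q^(1/2) / nu_k)^2 >=
   nu_min eps^2, and summing over S(eps) against the lower bound (A7) gives the
   estimate. *)

Lemma sqr_sum_mul_le (R : rcfType) (I : finType) (a b : I -> R) :
  (\sum_i a i * b i) ^+ 2 <= (\sum_i a i ^+ 2) * (\sum_i b i ^+ 2).
Proof.
set A := \sum_i a i ^+ 2; set Bq := \sum_i b i ^+ 2; set C := \sum_i a i * b i.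
have A0 : 0 <= A by apply: sumr_ge0 => i _; exact: sqr_ge0.
have B0 : 0 <= Bq by apply: sumr_ge0 => i _; exact: sqr_ge0.
have : 0 <= \sum_i (Bq * a i - C * b i) ^+ 2 by apply: sumr_ge0 => i _; exact: sqr_ge0.
have -> : \sum_i (Bq * a i - C * b i) ^+ 2 = Bq * (A * Bq - C ^+ 2).
  rewrite (eq_bigr (fun i => Bq ^+ 2 * a i ^+ 2 - (2 * Bq * C) * (a i * b i)
                             + C ^+ 2 * b i ^+ 2)); last by move=> i _; ring.
  rewrite big_split /= sumrB -!mulr_sumr -/A -/Bq -/C; ring.
have [Bp|] := ltrP 0 Bq; first by rewrite pmulr_rge0 // subr_ge0 mulrC.
move=> Ble0 _; have Bz : Bq = 0 by apply/eqP; rewrite eq_le Ble0 B0.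
have bz i : b i = 0.
  apply/eqP; rewrite -sqrf_eq0; apply/eqP.
  move/eqP: Bz; rewrite psumr_eq0; last by move=> j _; exact: sqr_ge0.
  by move/allP => /(_ i (mem_index_enum _)) /implyP /(_ isT) /eqP.
by rewrite /C big1 ?expr0n ?mulr_ge0 // => i _; rewrite bz mulr0.
Qed.

Section Euclidean.
Variables (R : realType) (n : nat).
Local Notation vec := 'rV[R]_n.

Lemma enorm_ge0 (v : vec) : 0 <= enorm v.
Proof. exact: sqrtr_ge0. Qed.

Lemma sum_sqr_ge0 (v : vec) : 0 <= \sum_i v ord0 i ^+ 2.
Proof. by apply: sumr_ge0 => i _; exact: sqr_ge0. Qed.

Lemma enorm_eq0 (v : vec) : (enorm v == 0) = (v == 0).
Proof.
apply/idP/eqP => [|->]; last by rewrite /enorm big1 ?sqrtr0 // => i _; rewrite mxE expr0n.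
rewrite /enorm sqrtr_eq0 => v0; apply/rowP => i; rewrite mxE; apply/eqP.
have : \sum_j v ord0 j ^+ 2 == 0 by rewrite eq_le v0 sum_sqr_ge0.
rewrite psumr_eq0 => [/allP/(_ i (mem_index_enum _))|j _]; last exact: sqr_ge0.
by rewrite sqrf_eq0.
Qed.

Lemma enorm0 : enorm (0 : vec) = 0.
Proof. by apply/eqP; rewrite enorm_eq0. Qed.

Lemma enormZ (a : R) (v : vec) : enorm (a *: v) = `|a| * enorm v.
Proof.
rewrite /enorm (eq_bigr (fun i => a ^+ 2 * v ord0 i ^+ 2)); last first.
  by move=> i _; rewrite mxE exprMn.
by rewrite -mulr_sumr sqrtrM ?sqr_ge0 // sqrtr_sqr.
Qed.

Lemma dotpr0 (u : vec) : dotp u 0 = 0.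
Proof. by rewrite /dotp big1 // => i _; rewrite mxE mulr0. Qed.

Lemma dotpBl (u v w : vec) : dotp (u - v) w = dotp u w - dotp v w.
Proof. by rewrite /dotp -sumrB; apply: eq_bigr => i _; rewrite !mxE mulrBl. Qed.

Lemma normr_dotp_le (u v : vec) : `|dotp u v| <= enorm u * enorm v.
Proof.
rewrite /enorm -sqrtrM ?sum_sqr_ge0 // -sqrtr_sqr ler_sqrt.
  exact: sqr_sum_mul_le.
by rewrite mulr_ge0 ?sum_sqr_ge0.
Qed.

Lemma quad0 (B : 'M[R]_n) : quad B 0 = 0.
Proof. by rewrite /quad !mul0mx mxE. Qed.

Lemma quad_dotp (B : 'M[R]_n) (s : vec) : quad B s = dotp (s *m B) s.
Proof. by rewrite /quad /dotp mxE; apply: eq_bigr => i _; congr (_ * _); rewrite mxE. Qed.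

Lemma enorm_mulmx_le (v : vec) (M : 'M[R]_n) :
  enorm (v *m M) <= enorm v * Num.sqrt (\sum_j \sum_i M i j ^+ 2).
Proof.
rewrite /enorm -sqrtrM ?sum_sqr_ge0 // ler_sqrt; last first.
  by rewrite mulr_ge0 ?sum_sqr_ge0 //; do 2 (apply: sumr_ge0 => ? _); exact: sqr_ge0.
rewrite mulr_sumr; apply: ler_sum => j _; rewrite mxE; exact: sqr_sum_mul_le.
Qed.

Lemma opnorm_has_sup (B : 'M[R]_n) :
  has_sup [set enorm (v *m B^T) | v in [set v : vec | enorm v <= 1]].
Proof.
split; first by exists (enorm (0 *m B^T)), 0 => //=; rewrite enorm0 ler01.
exists (Num.sqrt (\sum_j \sum_i B^T i j ^+ 2)) => _ [v /= v1 <-].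
apply: le_trans (enorm_mulmx_le v B^T) _.
by rewrite -[X in _ <= X]mul1r ler_wpM2r ?sqrtr_ge0.
Qed.

Lemma enorm_le_opnorm (B : 'M[R]_n) (v : vec) :
  enorm v <= 1 -> enorm (v *m B^T) <= opnorm B.
Proof. by move=> v1; apply: sup_upper_bound (opnorm_has_sup B) _ _; exists v. Qed.

Lemma opnorm_ge0 (B : 'M[R]_n) : 0 <= opnorm B.
Proof.
by apply: le_trans (@enorm_le_opnorm B 0 _); rewrite ?mul0mx enorm0 ?ler01.
Qed.

Lemma enorm_mul_trmx_le (B : 'M[R]_n) (v : vec) :
  enorm (v *m B^T) <= opnorm B * enorm v.
Proof.
have [->|vn0] := eqVneq v 0; first by rewrite mul0mx enorm0 mulr0.
have vp : 0 < enorm v by rewrite lt_def enorm_eq0 vn0 enorm_ge0.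
rewrite mulrC -ler_pdivrMl // -[X in X * _]ger0_norm ?invr_ge0 ?enorm_ge0 //.
rewrite -enormZ scalemxAl; apply: enorm_le_opnorm.
by rewrite enormZ ger0_norm ?invr_ge0 ?enorm_ge0 // mulVf ?gt_eqF.
Qed.

Lemma normr_quad_le (B : 'M[R]_n) (s : vec) : B^T = B ->
  `|quad B s| <= opnorm B * enorm s ^+ 2.
Proof.
move=> BT; rewrite quad_dotp; apply: le_trans (normr_dotp_le _ _) _.
by rewrite -{1}BT expr2 mulrA ler_wpM2r ?enorm_ge0 ?enorm_mul_trmx_le.
Qed.
End Euclidean.

Section RatioTest.
Variables (R : realFieldType) (th1 th2 nuinv q ss N D : R).
Hypotheses (th1_lt1 : th1 < 1) (nuinv_gt0 : 0 < nuinv).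
Hypotheses (q_ge0 : 0 <= q) (ss_le : ss <= th2 ^+ 2 * q).
Hypothesis D_ge : (1 - th1) * (2^-1 * nuinv * q) <= D.

Lemma successful_decrease_ge (kf eta1h smin decr : R) :
  0 < kf -> 0 < eta1h -> 0 < smin -> smin <= th1 * nuinv ->
  N - 2 * kf * ss <= decr -> eta1h <= N / D ->
  2^-1 * (eta1h - 4 * kf * th1 * th2 ^+ 2 / ((1 - th1) * smin)) * (1 - th1) * (nuinv * q)
    <= decr.
Proof.
move=> kf0 e0 sm0 sm_le Ndecr eN.
(* With the convention [N / 0 = 0], a zero model decrease cannot pass the test. *)
have D_gt0 : 0 < D.
  have D_ge0 : 0 <= D.
    by apply: le_trans D_ge; rewrite !mulr_ge0 ?invr_ge0 ?subr_ge0 ?(ltW th1_lt1) ?(ltW nuinv_gt0).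
  rewrite lt_def D_ge0 andbT.
  by apply: contraTneq eN => ->; rewrite invr0 mulr0 -ltNge.
have eD : eta1h * D <= N by rewrite -ler_pdivlMr.
(* The correction term of [eta1] absorbs the error [2 kf ss <= 2 kf th2^2 q]
   because [Z = th1 nuinv / smin >= 1]. *)
set Z := th1 * nuinv / smin.
have Z1 : 1 <= Z by rewrite /Z ler_pdivlMr // mul1r.
have -> : 2^-1 * (eta1h - 4 * kf * th1 * th2 ^+ 2 / ((1 - th1) * smin)) * (1 - th1)
            * (nuinv * q)
          = eta1h * ((1 - th1) * (2^-1 * nuinv * q)) - 2 * kf * (th2 ^+ 2 * q) * Z.
  by rewrite /Z; field; rewrite gt_eqF //= subr_eq0 gt_eqF.
have : eta1h * ((1 - th1) * (2^-1 * nuinv * q)) <= eta1h * D by rewrite ler_pM2l.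
have : 2 * kf * ss <= 2 * kf * (th2 ^+ 2 * q) by rewrite ler_pM2l //; lra.
have : 2 * kf * (th2 ^+ 2 * q) <= 2 * kf * (th2 ^+ 2 * q) * Z.
  by rewrite ler_peMr // mulr_ge0 ?(mulr_ge0 (sqr_ge0 th2)) ?mulr_ge0 ?(ltW kf0).
lra.
Qed.

Lemma very_successful_ratio (eta2h C : R) : 0 < th1 ->
  eta2h < 1 -> 0 <= C -> 0 < q -> `|N - D| <= 2^-1 * C * ss ->
  th1 * th2 ^+ 2 * C / ((1 - th1) * (1 - eta2h)) <= th1 * nuinv -> eta2h <= N / D.
Proof.
move=> th1_gt0 e2 C0 q_gt0 ND sig_ge.
have D0 : 0 < (1 - th1) * (2^-1 * nuinv * q) by rewrite !mulr_gt0 ?invr_gt0 ?subr_gt0.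
rewrite ler_pdivlMr; last exact: lt_le_trans D_ge.
have K : th2 ^+ 2 * C <= (1 - eta2h) * (1 - th1) * nuinv.
  rewrite -(ler_pM2l th1_gt0) mulrA.
  move: sig_ge; rewrite ler_pdivrMr ?mulr_gt0 ?subr_gt0 //.
  by have -> : th1 * nuinv * ((1 - th1) * (1 - eta2h))
               = th1 * ((1 - eta2h) * (1 - th1) * nuinv) by ring.
have : 2^-1 * C * ss <= 2^-1 * C * (th2 ^+ 2 * q) by rewrite ler_wpM2l // mulr_ge0 //; lra.
have : (2^-1 * q) * (th2 ^+ 2 * C) <= (2^-1 * q) * ((1 - eta2h) * (1 - th1) * nuinv).
  by rewrite ler_wpM2l // mulr_ge0 //; lra.
have : (1 - eta2h) * ((1 - th1) * (2^-1 * nuinv * q)) <= (1 - eta2h) * D.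
  by rewrite ler_wpM2l //; lra.
move: ND; rewrite distrC ler_norml => /andP[_ ND].
have -> : 2^-1 * C * (th2 ^+ 2 * q) = 2^-1 * q * (th2 ^+ 2 * C) by ring.
have -> : 2^-1 * q * ((1 - eta2h) * (1 - th1) * nuinv)
          = (1 - eta2h) * ((1 - th1) * (2^-1 * nuinv * q)) by ring.
lra.
Qed.

End RatioTest.

Lemma count_mul_le_telescope (R : numDomainType) (F : nat -> R) (P : pred nat) (c : R) N :
  (forall k, F k.+1 <= F k) -> (forall k, P k -> c <= F k - F k.+1) ->
  (count P (iota 0 N))%:R * c <= F 0%N - F N.
Proof.
move=> F_dec F_P; elim: N => [|N IH]; first by rewrite mul0r subrr.
rewrite -addn1 iotaD count_cat /= addn0 addn1 natrD mulrDl.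
have -> : F 0%N - F N.+1 = (F 0%N - F N) + (F N - F N.+1) by rewrite addrA subrK.
apply: lerD => //; have [/F_P|_] := boolP (P N); first by rewrite mul1r.
by rewrite mul0r subr_ge0.
Qed.

Section iR2N.
Variables (R : realType) (n : nat).
Local Notation vec := 'rV[R]_n.
Variables (f : vec -> R) (gradf : vec -> vec) (h : vec -> \bar R)
  (psi : vec -> vec -> \bar R).
Variables (kf kgrad g1 g2 g3 eta1h eta2h th1 th2 smin L kB kh lam low : R).
Variables (x : nat -> vec) (sigma : nat -> R) (B : nat -> 'M[R]_n) (scp s : nat -> vec)
  (fh0 fh1 : nat -> R) (gh : nat -> vec).

Let nu k := nu_of th1 (B k) (sigma k).
Let model_decr k := pred_decr (fh0 k) (gh k) (B k) (psi (x k)) (s k).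
Let actual_decr k := act_decr h (x k) (s k) (fh0 k) (fh1 k).
Let rho k := rho_hat (actual_decr k) (model_decr k).
Let merit k := f (x k) + fine (h (x k)).
Let C := L + kB + 2 * kh + 4 * kf + 2 * kgrad.
Let eta1 := eta1h - 4 * kf * th1 * th2 ^+ 2 / ((1 - th1) * smin).
Let sigma_vs := th1 * th2 ^+ 2 * C / ((1 - th1) * (1 - eta2h)).
Let sigma_succ := Num.max sigma_vs lam^-1.
Let sigma_max := Num.max (sigma 0) (g2 * sigma_succ).
Let nu_min := th1 / (kB + sigma_max).
Let S_eps eps k :=
  eta1h <= rho k /\ forall j, (j <= k)%N -> eps <= (nu j)^-1 * enorm (scp j).

Hypothesis psi_proper : forall y w, psi y w <> -oo%E.
Hypothesis psi0 : forall y, psi y 0 = h y.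
Hypotheses (kf_gt0 : 0 < kf) (kgrad_gt0 : 0 < kgrad) (kh_gt0 : 0 < kh) (kB_gt0 : 0 < kB).
Hypotheses (L_ge0 : 0 <= L) (g1_gt1 : 1 < g1) (g1_le_g2 : g1 <= g2).
Hypotheses (eta1h_gt0 : 0 < eta1h) (eta2h_lt1 : eta2h < 1).
Hypotheses (th1_gt0 : 0 < th1) (th1_lt1 : th1 < 1) (th2_gt1 : 1 < th2).
Hypothesis smin_gt : 4 * kf * th1 * th2 ^+ 2 / (eta1h * (1 - th1)) < smin.
Hypothesis sigma0_ge : smin <= sigma 0.
Hypothesis h_x0_fin : h (x 0) \is a fin_num.
Hypothesis B_sym : forall k, (B k)^T = B k.
Hypothesis cp_descent : forall k,
  (m_cp (fh0 k) (gh k) (psi (x k)) (nu k)^-1 (scp k)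
   <= m_cp (fh0 k) (gh k) (psi (x k)) (nu k)^-1 0)%E.
Hypothesis step_descent : forall k,
  (m_q (fh0 k) (gh k) (B k) (psi (x k)) (sigma k) (s k)
   <= m_q (fh0 k) (gh k) (B k) (psi (x k)) (sigma k) (scp k))%E
  /\ enorm (s k) <= th2 * enorm (scp k).
Hypothesis x_update : forall k, x k.+1 = if eta1h <= rho k then x k + s k else x k.
Hypothesis sigma_update : forall k, let r := rho k in
  exists sg : R,
    (eta2h <= r -> g3 * sigma k <= sg <= sigma k) /\
    (eta1h <= r < eta2h -> sigma k <= sg <= g1 * sigma k) /\
    (r < eta1h -> g1 * sigma k <= sg <= g2 * sigma k) /\
    sigma k.+1 = Num.max sg smin.
Hypothesis f_taylor :
  forall y v, `|f (y + v) - f y - dotp (gradf y) v| <= 2^-1 * L * enorm v ^+ 2.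
Hypothesis B_bounded : forall k, opnorm (B k) <= kB.
Hypothesis psi_h_close : forall y v, (psi y v = +oo%E /\ h (y + v) = +oo%E) \/
  exists a b : R, psi y v = a%:E /\ h (y + v) = b%:E /\ `|a - b| <= kh * enorm v ^+ 2.
Hypothesis cp_model_decrease : forall k,
  ((1 - th1)%:E * xi_cp (fh0 k) (gh k) (psi (x k)) (scp k) <= model_decr k)%E.
Hypothesis f_h_ge_low : forall y, (low%:E <= (f y)%:E + h y)%E.
Hypothesis inexact_oracle : forall k,
  `|f (x k) - fh0 k| <= kf * enorm (s k) ^+ 2 /\
  `|f (x k + s k) - fh1 k| <= kf * enorm (s k) ^+ 2 /\
  enorm (gradf (x k) - gh k) <= kgrad * enorm (s k).

Lemma th2_ge0 : 0 <= th2.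
Proof. exact: le_trans ler01 (ltW th2_gt1). Qed.

Lemma smin_gt0 : 0 < smin.
Proof.
apply: le_lt_trans smin_gt.
by rewrite divr_ge0 ?mulr_ge0 ?subr_ge0 ?th2_ge0 ?(ltW kf_gt0) ?(ltW th1_gt0) ?(ltW th1_lt1)
  ?(ltW eta1h_gt0).
Qed.

Lemma sigma_ge_smin k : smin <= sigma k.
Proof.
elim: k => [//|k _]; have [sg [_ [_ [_ ->]]]] := sigma_update k.
by rewrite le_max lexx orbT.
Qed.

Lemma sigma_gt0 k : 0 < sigma k.
Proof. exact: lt_le_trans smin_gt0 (sigma_ge_smin k). Qed.

Lemma th1_mul_nuinv k : th1 * (nu k)^-1 = opnorm (B k) + sigma k.
Proof. by rewrite /nu /nu_of invf_div mulrC divfK ?gt_eqF ?ltr_wpDl ?opnorm_ge0 ?sigma_gt0. Qed.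

Lemma smin_le_th1_nuinv k : smin <= th1 * (nu k)^-1.
Proof. by rewrite th1_mul_nuinv (le_trans (sigma_ge_smin k)) // lerDr opnorm_ge0. Qed.

Lemma nuinv_gt0 k : 0 < (nu k)^-1.
Proof. by rewrite -(pmulr_rgt0 _ th1_gt0) (lt_le_trans smin_gt0) ?smin_le_th1_nuinv. Qed.

Lemma iterate_estimates k : h (x k) \is a fin_num ->
  h (x k + s k) \is a fin_num /\
  (1 - th1) * (2^-1 * (nu k)^-1 * enorm (scp k) ^+ 2) <= fine (model_decr k) /\
  `|fine (actual_decr k) - fine (model_decr k)| <= 2^-1 * C * enorm (s k) ^+ 2 /\
  fine (actual_decr k) - 2 * kf * enorm (s k) ^+ 2
    <= merit k - (f (x k + s k) + fine (h (x k + s k))).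
Proof.
move=> /EFin_fin_numP[hx Ehx].
have [m_step _] := step_descent k; have [fx0 [fx1 grad]] := inexact_oracle k.
have := cp_descent k; rewrite /m_cp psi0 Ehx.
case Ecp: (psi (x k) (scp k)) => [pcp| |]; last by move/psi_proper: Ecp.
  2: by rewrite addey // leye_eq.
rewrite -!EFinD lee_fin /phi_cp dotpr0 enorm0 expr0n /= mulr0 !addr0 => cp_le.
have [[Eps _]|[ps [hs [Eps [Ehs ps_hs]]]]] := psi_h_close (x k) (s k).
  by move: m_step; rewrite /m_q Eps Ecp addey // leye_eq.
have := cp_model_decrease k.
rewrite /xi_cp /model_decr /pred_decr /actual_decr /act_decr /merit Ecp Eps psi0 Ehx Ehs.
rewrite -!EFinD -EFinM lee_fin.
rewrite /phi_cp /phi_q !dotpr0 quad0 mulr0 !addr0 /= => cp_model.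
split => //; split.
  by apply: le_trans cp_model; rewrite ler_wpM2l ?subr_ge0 ?(ltW th1_lt1) //; lra.
have grad_s : `|dotp (gradf (x k)) (s k) - dotp (gh k) (s k)| <= kgrad * enorm (s k) ^+ 2.
  rewrite -dotpBl; apply: le_trans (normr_dotp_le _ _) _.
  by rewrite expr2 mulrA ler_wpM2r ?enorm_ge0.
have quad_s : `|quad (B k) (s k)| <= kB * enorm (s k) ^+ 2.
  by apply: le_trans (normr_quad_le _ (B_sym k)) _; rewrite ler_wpM2r ?sqr_ge0 ?B_bounded.
have := f_taylor (x k) (s k).
move: fx0 fx1 grad_s quad_s ps_hs; rewrite /C !ler_norml.
move=> /andP[? ?] /andP[? ?] /andP[? ?] /andP[? ?] /andP[? ?] /andP[? ?].
by split; [apply/andP; split|]; lra.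
Qed.

Lemma eta1_gt0 : 0 < eta1.
Proof.
have th1' : 0 < 1 - th1 by rewrite subr_gt0.
move: smin_gt; rewrite /eta1 subr_gt0 !ltr_pdivrMr ?mulr_gt0 ?smin_gt0 // => ineq.
by have -> : eta1h * ((1 - th1) * smin) = smin * (eta1h * (1 - th1)) by ring.
Qed.

Lemma step_sqr_le k : enorm (s k) ^+ 2 <= th2 ^+ 2 * enorm (scp k) ^+ 2.
Proof. by rewrite -exprMn ler_pXn2r ?nnegrE ?mulr_ge0 ?enorm_ge0 ?th2_ge0 ?(step_descent k).2. Qed.

Lemma h_iterate_fin k : h (x k) \is a fin_num.
Proof.
elim: k => // k IH; rewrite x_update; case: ifP => _ //.
exact: (iterate_estimates IH).1.
Qed.

Lemma successful_decrease k : eta1h <= rho k ->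
  2^-1 * eta1 * (1 - th1) * ((nu k)^-1 * enorm (scp k) ^+ 2) <= merit k - merit k.+1.
Proof.
move=> succ; have [_ [D_ge [_ act_le]]] := iterate_estimates (h_iterate_fin k).
rewrite {2}/merit x_update succ.
exact: (successful_decrease_ge th1_lt1 (nuinv_gt0 k) (sqr_ge0 _) (step_sqr_le k) D_ge
  kf_gt0 eta1h_gt0 smin_gt0 (smin_le_th1_nuinv k) act_le succ).
Qed.

Lemma very_successful k : scp k != 0 -> sigma_vs <= sigma k -> eta2h <= rho k.
Proof.
move=> scp0 sig_ge; have [_ [D_ge [act_pred _]]] := iterate_estimates (h_iterate_fin k).
apply: (very_successful_ratio th1_lt1 (nuinv_gt0 k) (sqr_ge0 _) (step_sqr_le k) D_ge
  th1_gt0 eta2h_lt1 _ _ act_pred).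
- by rewrite /C !addr_ge0 ?mulr_ge0 ?(ltW kB_gt0) ?(ltW kh_gt0) ?(ltW kf_gt0) ?(ltW kgrad_gt0).
- by rewrite exprn_gt0 // lt_def enorm_eq0 scp0 enorm_ge0.
- by rewrite th1_mul_nuinv (le_trans sig_ge) // lerDr opnorm_ge0.
Qed.

Lemma sigma_le_max k : (forall j, (j < k)%N -> scp j != 0) -> sigma k <= sigma_max.
Proof.
elim: k => [_|k IH nz]; first by rewrite le_max lexx.
have {}IH : sigma k <= sigma_max by apply: IH => j /leqW; exact: nz.
have [sg [vs_case [s_case [u_case ->]]]] := sigma_update k.
have smin_le : smin <= sigma_max by rewrite (le_trans sigma0_ge) // le_max lexx.
rewrite ge_max smin_le andbT.
have [vs|not_vs] := lerP eta2h (rho k).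
  by have /andP[_ sg_le] := vs_case vs; apply: le_trans IH.
have sig_lt : sigma k < sigma_vs.
  by rewrite ltNge; apply/negP => /(very_successful (nz k (ltnSn k))); rewrite leNgt not_vs.
have sg_le : sg <= g2 * sigma k.
  have [succ|unsucc] := lerP eta1h (rho k); last by have /andP[] := u_case unsucc.
  have /andP[_ sg_le] := s_case (introT andP (conj succ not_vs)).
  by rewrite (le_trans sg_le) // ler_wpM2r ?(ltW (sigma_gt0 k)).
apply: le_trans sg_le _; rewrite le_max ler_wpM2l ?orbT //.
  exact: le_trans ler01 (le_trans (ltW g1_gt1) g1_le_g2).
by rewrite le_max (ltW sig_lt).
Qed.

Lemma nu_min_le k : sigma k <= sigma_max -> nu_min <= nu k.
Proof.
move=> sig_le; rewrite /nu_min /nu /nu_of ler_wpM2l ?(ltW th1_gt0) // lef_pV2 ?posrE.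
- by rewrite lerD ?B_bounded.
- by rewrite addr_gt0 // (lt_le_trans (sigma_gt0 k) sig_le).
- by rewrite ltr_wpDl ?opnorm_ge0 ?sigma_gt0.
Qed.

Lemma nu_min_gt0 : 0 < nu_min.
Proof.
by rewrite divr_gt0 // addr_gt0 // (lt_le_trans smin_gt0) // (le_trans sigma0_ge) // le_max lexx.
Qed.

Lemma decrease_coef_gt0 : 0 < 2^-1 * eta1 * (1 - th1).
Proof. by rewrite mulr_gt0 ?subr_gt0 // mulr_gt0 ?invr_gt0 ?eta1_gt0. Qed.

Lemma merit_nonincreasing k : merit k.+1 <= merit k.
Proof.
have [succ|unsucc] := lerP eta1h (rho k); last by rewrite /merit x_update ifN ?lexx // -ltNge.
rewrite -subr_ge0; apply: le_trans (successful_decrease succ).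
by rewrite mulr_ge0 ?(ltW decrease_coef_gt0) // mulr_ge0 ?sqr_ge0 ?(ltW (nuinv_gt0 k)).
Qed.

Lemma count_successful_mul_le eps N : 0 < eps ->
  (count (fun k => `[< S_eps eps k >]) (iota 0 N))%:R * (2^-1 * eta1 * (1 - th1) * nu_min * eps ^+ 2)
    <= merit 0 - merit N.
Proof.
move=> eps_gt0; apply: count_mul_le_telescope merit_nonincreasing _ => k /asboolP[succ crit].
have scp_nz j : (j <= k)%N -> scp j != 0.
  by move=> /crit; apply: contraTneq => ->; rewrite enorm0 mulr0 -ltNge.
have nu_le := nu_min_le (sigma_le_max (fun j jk => scp_nz j (ltnW jk))).
apply: le_trans (successful_decrease succ); rewrite -mulrA ler_wpM2l ?(ltW decrease_coef_gt0) //.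
have nu_gt0 : 0 < nu k by rewrite -invr_gt0 nuinv_gt0.
have -> : (nu k)^-1 * enorm (scp k) ^+ 2 = nu k * ((nu k)^-1 * enorm (scp k)) ^+ 2.
  by field; rewrite gt_eqF.
rewrite ler_pM ?(ltW nu_min_gt0) ?sqr_ge0 // ler_pXn2r ?nnegrE ?(ltW eps_gt0) ?crit //.
exact: le_trans (ltW eps_gt0) (crit k (leqnn k)).
Qed.

Lemma merit_ge_low k : low <= merit k.
Proof. by have := f_h_ge_low (x k); rewrite /merit -(fineK (h_iterate_fin k)) -EFinD lee_fin. Qed.

Lemma count_bound_coef_gt0 eps : 0 < eps ->
  0 < (2^-1 * eta1 * (1 - th1) * nu_min)^-1 * eps ^- 2.
Proof.
move=> eps_gt0; rewrite -invfM invr_gt0 mulr_gt0 ?exprn_gt0 //.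
by rewrite mulr_gt0 ?decrease_coef_gt0 ?nu_min_gt0.
Qed.

Lemma count_successful_le eps N : 0 < eps ->
  (count (fun k => `[< S_eps eps k >]) (iota 0 N))%:R
    <= (merit 0 - low) * ((2^-1 * eta1 * (1 - th1) * nu_min)^-1 * eps ^- 2).
Proof.
move=> eps_gt0; have := count_bound_coef_gt0 eps_gt0.
rewrite -invfM invr_gt0 => c_gt0; rewrite ler_pdivlMr //.
apply: le_trans (count_successful_mul_le N eps_gt0) _.
by rewrite lerB ?merit_ge_low.
Qed.

End iR2N.

Theorem lemma3p6
  (R : realType) (n : nat)
  (f : 'rV[R]_n -> R) (gradf : 'rV[R]_n -> 'rV[R]_n)
  (h : 'rV[R]_n -> \bar R) (psi : 'rV[R]_n -> 'rV[R]_n -> \bar R) (* psi x s = psi(s;x) *)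
  (kf kgrad g1 g2 g3 eta1h eta2h th1 th2 smin : R)
  (L kB kh lam low eps : R)
  (x : nat -> 'rV[R]_n) (sigma : nat -> R) (B : nat -> 'M[R]_n)
  (scp s : nat -> 'rV[R]_n)
  (fh0 fh1 : nat -> R)            (* fhat(x_k), fhat(x_k + s_k) at iteration k *)
  (gh : nat -> 'rV[R]_n) :        (* gradient approximation at x_k at iteration k *)
  (forall y, differentiable f y /\ forall v, 'd f y v = dotp (gradf y) v) ->
  continuous gradf ->
  proper_fun h -> lower_semicontinuous h ->
  (forall y, proper_fun (psi y) /\ lower_semicontinuous (psi y)) ->
  (forall y, psi y 0 = h y) ->
  (forall y v, limiting_subgrad (psi y) 0 v -> limiting_subgrad h y v) ->
  0 < lam ->
  (forall y lam', 0 < lam' < lam -> exists b : R,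
      forall w, (b%:E <= psi y w + (enorm w ^+ 2 / (2 * lam'))%:E)%E) ->
  0 < kf -> 0 < kgrad ->
  0 < g3 <= 1 -> 1 < g1 <= g2 ->
  0 < eta1h <= eta2h -> eta2h < 1 ->
  0 < th1 < 1 -> 1 < th2 ->
  4 * kf * th1 * th2 ^+ 2 / (eta1h * (1 - th1)) < smin ->
  smin <= sigma 0 ->
  (forall k, (B k)^T = B k) ->
  (forall k, (m_cp (fh0 k) (gh k) (psi (x k)) (nu_of th1 (B k) (sigma k))^-1 (scp k)
              <= m_cp (fh0 k) (gh k) (psi (x k)) (nu_of th1 (B k) (sigma k))^-1 0)%E) ->
  (forall k, (m_q (fh0 k) (gh k) (B k) (psi (x k)) (sigma k) (s k)
              <= m_q (fh0 k) (gh k) (B k) (psi (x k)) (sigma k) (scp k))%E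
             /\ enorm (s k) <= th2 * enorm (scp k)) ->
  (forall k, x k.+1 =
     if eta1h <= rho_hat (act_decr h (x k) (s k) (fh0 k) (fh1 k))
                         (pred_decr (fh0 k) (gh k) (B k) (psi (x k)) (s k))
     then x k + s k else x k) ->
  (forall k, let r := rho_hat (act_decr h (x k) (s k) (fh0 k) (fh1 k))
                              (pred_decr (fh0 k) (gh k) (B k) (psi (x k)) (s k)) in
     exists sg : R,
       (eta2h <= r -> g3 * sigma k <= sg <= sigma k) /\
       (eta1h <= r < eta2h -> sigma k <= sg <= g1 * sigma k) /\
       (r < eta1h -> g1 * sigma k <= sg <= g2 * sigma k) /\
       sigma k.+1 = Num.max sg smin) ->
  (* (A1) *)
  0 <= L ->
  (forall y v, `|f (y + v) - f y - dotp (gradf y) v| <= 2^-1 * L * enorm v ^+ 2) ->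
  (* (A2) *)
  0 < kB -> (forall k, opnorm (B k) <= kB) ->
  (* (A3) *)
  0 < kh ->
  (forall y v, (psi y v = +oo%E /\ h (y + v) = +oo%E) \/
     exists a b : R, psi y v = a%:E /\ h (y + v) = b%:E /\ `|a - b| <= kh * enorm v ^+ 2) ->
  (* (A4) *)
  (forall k, ((1 - th1)%:E * xi_cp (fh0 k) (gh k) (psi (x k)) (scp k)
              <= pred_decr (fh0 k) (gh k) (B k) (psi (x k)) (s k))%E) ->
  (* (A6) *)
  (forall k, `|f (x k) - fh0 k| <= kf * enorm (s k) ^+ 2 /\
             `|f (x k + s k) - fh1 k| <= kf * enorm (s k) ^+ 2 /\
             enorm (gradf (x k) - gh k) <= kgrad * enorm (s k)) ->
  (* (A7) *)
  (forall y, (low%:E <= (f y)%:E + h y)%E) ->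
  (* infinitely many successful iterations *)
  (forall N, exists k, (N <= k)%N /\
     eta1h <= rho_hat (act_decr h (x k) (s k) (fh0 k) (fh1 k))
                      (pred_decr (fh0 k) (gh k) (B k) (psi (x k)) (s k))) ->
  0 < eps ->
  let eta1 := eta1h - 4 * kf * th1 * th2 ^+ 2 / ((1 - th1) * smin) in
  let sigma_succ := Num.max (th1 * th2 ^+ 2 * (L + kB + 2 * kh + 4 * kf + 2 * kgrad)
                               / ((1 - th1) * (1 - eta2h))) lam^-1 in
  let sigma_max := Num.max (sigma 0) (g2 * sigma_succ) in
  let nu_min := th1 / (kB + sigma_max) in
  (* |S(eps) /\ [0,N)| <= omega_s eps^-2 for every N, where
     k in S(eps) iff k successful and k < k_eps, i.e. nu_j^-1 ||scp_j|| >= eps for all j <= k *)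
  forall N : nat,
    (((size [seq k <- iota 0%N N |
        `[< eta1h <= rho_hat (act_decr h (x k) (s k) (fh0 k) (fh1 k))
                             (pred_decr (fh0 k) (gh k) (B k) (psi (x k)) (s k))
            /\ forall j, (j <= k)%N ->
                 eps <= (nu_of th1 (B j) (sigma j))^-1 * enorm (scp j) >]])%:R : R)%:E
     <= ((f (x 0%N))%:E + h (x 0%N) - low%:E)
        * ((2^-1 * eta1 * (1 - th1) * nu_min)^-1 * eps ^- 2)%:E)%E.
Proof.
move=> _ _ [h_nmo _] _ psi_proper psi0 _ _ _ kf_gt0 kgrad_gt0 _ /andP[g1_gt1 g1_le_g2]
  /andP[eta1h_gt0 _] eta2h_lt1 /andP[th1_gt0 th1_lt1] th2_gt1 smin_gt sigma0_ge B_sym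
  cp_descent step_descent x_update sigma_update L_ge0 f_taylor kB_gt0 B_bounded kh_gt0
  psi_h_close cp_model_decrease inexact_oracle f_h_ge_low _ eps_gt0 eta1 sigma_succ
  sigma_max nu_min N.
have {}psi_proper y w : psi y w <> -oo%E := (psi_proper y).1.1 w.
have [hx0_fin|] := boolP (h (x 0%N) \is a fin_num).
  rewrite -(fineK hx0_fin) -EFinD -EFinM lee_fin size_filter.
  exact: (count_successful_le (gradf := gradf) (g1 := g1) (g3 := g3)).
rewrite fin_numE negb_and !negbK => /orP[/eqP/h_nmo //|/eqP ->].
rewrite addye // gt0_mulye ?leey // lte_fin.
exact: count_bound_coef_gt0.
Qed.
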